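(* Let $\mathbb{F}=\mathbb{F}_p$, $r_1,\dots,r_n\in\mathbb{F}^N$, and let $j_1,\dots,j_k\in[N]$ be distinct. Then $$\mathcal{S}^{\{j_1,\dots,j_k\}}(r_1,\dots,r_n)=\sum_{\tau=(\tau_1,\dots,\tau_k)}\ \prod_{t=1}^k\Big((-1)^{|\tau_t|}|\tau_t|!\;r_{\tau_t}(j_t)\Big)\cdot\mathcal{S}\Big(r\big[[n]\setminus\textstyle\bigcup_t\tau_t\big]\Big),$$ where the sum is over all ordered $k$-tuples of pairwise disjoint, possibly empty, subsets $\tau_t$ of $[n]$.
   Context: For vectors $w_1,\dots,w_L\in\mathbb{F}^N$ and $T\subseteq[N]$, $\mathcal{S}^T(w_1,\dots,w_L)=\sum_\rho\prod_{i=1}^Lw_i(\rho(i))$ over injective maps $\rho:[L]\to[N]\setminus T$, and $\mathcal{S}=\mathcal{S}^{\emptyset}$. For $\tau\subseteq[n]$, $r_\tau$ is the coordinatewise product of $r_i$, $i\in\tau$ (the all-ones vector if $\tau=\emptyset$); $r[\sigma]$ is the list of $r_i$, $i\in\sigma$, and $\mathcal{S}(r[\emptyset])=1$. $r(j)$ is the $j$-th coordinate. *)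

From HB Require Import structures.
From mathcomp Require Import all_boot all_order all_algebra.
Set Implicit Arguments. Unset Strict Implicit. Unset Printing Implicit Defensive.
Import GRing.Theory.
Local Open Scope ring_scope.

(* Vectors in F^N are functions 'I_N -> F; [N] is 'I_N (0-based). *)

Definition Ssum (R : comNzRingType) (N : nat) (T : {set 'I_N})
    (ws : seq ('I_N -> R)) : R :=
  \sum_(rho : {ffun 'I_(size ws) -> 'I_N} |
          injectiveb rho && [forall i, rho i \notin T])
     \prod_(i < size ws) (nth (fun _ => 0) ws i) (rho i).

Definition S0 (R : comNzRingType) (N : nat) (ws : seq ('I_N -> R)) : R :=
  Ssum set0 ws.

Definition rprod (R : comNzRingType) (n N : nat) (r : 'I_n -> 'I_N -> R)
    (tau : {set 'I_n}) (j : 'I_N) : R :=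
  \prod_(i in tau) r i j.

Definition rsub (R : Type) (n N : nat) (r : 'I_n -> 'I_N -> R)
    (sigma : {set 'I_n}) : seq ('I_N -> R) :=
  [seq r i | i <- enum sigma].

From HB Require Import structures.
From mathcomp Require Import all_boot all_order all_algebra ring.
Set Implicit Arguments. Unset Strict Implicit. Unset Printing Implicit Defensive.
Import GRing.Theory.
Local Open Scope ring_scope.

(* Write S^T(r[A]) as a sum over injective partial maps defined exactly on A
   with image avoiding T.  For j outside T, splitting according to whether j
   is hit gives
     S^T(r[A]) = S^{T+j}(r[A]) + sum_{a in A} r_a(j) S^{T+j}(r[A - a]),
   and inverting this recurrence in A gives
     S^{T+j}(r[A]) = sum_{s <= A} (-1)^|s| |s|! r_s(j) S^T(r[A - s]).
   Removing j_1, ..., j_k one at a time produces the sum over disjoint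
   families.  Nothing specific to F_p is used: the identity holds over any
   commutative ring. *)

Definition fupdate (I : finType) (V : Type) (f : {ffun I -> V}) (a : I) (v : V) :
  {ffun I -> V} := [ffun i => if i == a then v else f i].

Section FunctionUpdate.
Variables (I : finType) (V : eqType).
Implicit Types (f : {ffun I -> V}) (a : I) (v w : V).

Lemma fupdate_eq f a v : fupdate f a v a = v.
Proof. by rewrite ffunE eqxx. Qed.

Lemma fupdate_neq f a v i : i != a -> fupdate f a v i = f i.
Proof. by rewrite ffunE => /negbTE ->. Qed.

Lemma fupdate_fupdate f a v w : fupdate (fupdate f a v) a w = fupdate f a w.
Proof. by apply/ffunP => i; rewrite !ffunE; case: eqP. Qed.

Lemma fupdate_id f a v : (fupdate f a v == f) = (f a == v).
Proof.
apply/eqP/eqP => [<- | fa]; first exact: fupdate_eq.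
by apply/ffunP => i; rewrite ffunE; case: eqP => // ->.
Qed.

End FunctionUpdate.

Section SubsetRecurrence.
Variables (R : comNzRingType) (I : finType).
Implicit Types (A s : {set I}) (c : I -> R).

Lemma sum_subset_setU1 (G : I -> {set I} -> R) A :
  \sum_(s : {set I} | s \subset A) \sum_(a in s) G a s =
  \sum_(a in A) \sum_(s : {set I} | s \subset A :\ a) G a (a |: s).
Proof.
rewrite (exchange_big_dep (mem A)) /=; last by move=> s a /subsetP sA /sA.
apply: eq_bigr => a aA.
rewrite (reindex_onto (fun s : {set I} => a |: s) (fun s => s :\ a)) /=; last first.
  by move=> s /andP[_ aS]; rewrite setD1K.
apply: eq_bigl => s; apply/andP/idP => [[/andP[sA _] /eqP <-] | sA].
  exact: setSD.
have aNs : a \notin s by apply/negP => /(subsetP sA); rewrite !inE eqxx.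
rewrite setU11 setU1K // eqxx andbT; split=> //.
by rewrite subUset sub1set aA (subset_trans sA) ?subD1set.
Qed.

Definition inv_coef c s : R := (-1) ^+ #|s| * (#|s|`!)%:R * \prod_(i in s) c i.

Lemma inv_coef0 c : inv_coef c set0 = 1.
Proof. by rewrite /inv_coef cards0 big_set0 !mulr1. Qed.

Lemma inv_coef_rec c s :
  s != set0 -> inv_coef c s = - \sum_(a in s) c a * inv_coef c (s :\ a).
Proof.
case/set0Pn => a0 a0s; have [m cards] : exists m, #|s| = m.+1.
  by exists #|s|.-1; rewrite prednK // card_gt0; apply/set0Pn; exists a0.
have term a : a \in s ->
    c a * inv_coef c (s :\ a) = (-1) ^+ m * (m`!)%:R * \prod_(i in s) c i.
  move=> aS; rewrite /inv_coef (big_setD1 a aS) /=.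
  have -> : #|s :\ a| = m by move: (cardsD1 a s); rewrite aS cards add1n => -[].
  ring.
rewrite (eq_bigr _ term) sumr_const /inv_coef cards factS natrM -mulr_natr exprS.
ring.
Qed.

Lemma recurrence_inversion c (G H : {set I} -> R) :
  (forall A, H A = G A + \sum_(a in A) c a * G (A :\ a)) ->
  forall A, G A = \sum_(s : {set I} | s \subset A) inv_coef c s * H (A :\: s).
Proof.
move=> rec A; have [m] := ubnP #|A|; elim: m A => // m IH A /ltnSE cardA.
rewrite (bigD1 set0) ?sub0set //= inv_coef0 setD0 mul1r rec -addrA -[LHS]addr0.
congr (_ + _); apply/esym/eqP; rewrite addr_eq0; apply/eqP.
have shrink a : a \in A -> (#|A :\ a| < m)%N.
  by move=> aA; apply: leq_trans cardA; rewrite (cardsD1 a A) aA.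
transitivity (\sum_(s : {set I} | s \subset A)
                \sum_(a in s) c a * inv_coef c (s :\ a) * H (A :\: s)).
  rewrite sum_subset_setU1; apply: eq_bigr => a aA.
  rewrite IH ?shrink // big_distrr; apply: eq_bigr => s sA.
  have aNs : a \notin s by apply/negP => /(subsetP sA); rewrite !inE eqxx.
  by rewrite setU1K // setDDl; apply: mulrA.
rewrite (bigD1 set0) ?sub0set //= big_set0 add0r -sumrN.
by apply: eq_bigr => s /andP[_ s0]; rewrite inv_coef_rec // mulNr big_distrl opprK.
Qed.

End SubsetRecurrence.

Section PartialInjection.
Variables (n N : nat).
Implicit Types (T : {set 'I_N}) (A : {set 'I_n}) (rho : {ffun 'I_n -> option 'I_N}).

(* An injection from the indices in A to [N] \ T is encoded as a map
   [n] -> option [N] defined exactly on A; by [Ssum_rsub], [psum r T A]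
   below is S^T(r[A]). *)
Definition partinj T A rho : bool :=
  [&& [forall i, (rho i != None) == (i \in A)],
      [forall i, forall i', forall x,
         (rho i == Some x) && (rho i' == Some x) ==> (i == i')] &
      [forall i, forall x, (rho i == Some x) ==> (x \notin T)]].

Lemma partinjP T A rho :
  reflect [/\ forall i, (rho i != None) = (i \in A),
              forall i i' x, rho i = Some x -> rho i' = Some x -> i = i' &
              forall i x, rho i = Some x -> x \notin T] (partinj T A rho).
Proof.
apply: (iffP and3P) => [[/forallP dom /forallP inj /forallP im] | [dom inj im]].
  split=> [i | i i' x ei ei' | i x ei]; first exact: eqP (dom i).
    by apply/eqP; move/forallP/(_ i')/forallP/(_ x): (inj i); rewrite ei ei' !eqxx.
  by move/forallP/(_ x): (im i); rewrite ei eqxx.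
split; apply/forallP => i; first by rewrite dom.
  apply/forallP => i'; apply/forallP => x.
  by apply/implyP => /andP[/eqP ei /eqP ei']; rewrite (inj i i' x).
by apply/forallP => x; apply/implyP => /eqP /im.
Qed.

Lemma partinj_setU1 T A rho j : j \notin T ->
  partinj (j |: T) A rho = partinj T A rho && [forall i, rho i != Some j].
Proof.
move=> jT; apply/partinjP/andP => [[dom inj im] | [/partinjP[dom inj im] /forallP nj]].
  split; last by apply/forallP => i; apply/eqP => /(im i); rewrite setU11.
  by apply/partinjP; split=> // i x /(im i); rewrite in_setU1 negb_or => /andP[].
split=> // i x ei; rewrite in_setU1 negb_or (im i x ei) andbT.
by apply: contra_neq (nj i) => <-; rewrite ei.
Qed.

Lemma partinj_fupdate T A rho a j : a \in A -> j \notin T ->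
  partinj T A (fupdate rho a (Some j)) && (rho a == None) =
  partinj (j |: T) (A :\ a) rho.
Proof.
move=> aA jT; set rho' := fupdate rho a (Some j).
apply/andP/partinjP => [[/partinjP[dom inj im] /eqP ra] | [dom inj im]].
  have off i x : rho i = Some x -> rho' i = rho i.
    by move=> ei; rewrite fupdate_neq //; apply: contraPneq ei => ->; rewrite ra.
  split=> [i | i i' x ei ei' | i x ei].
  - rewrite in_setD1; case: (eqVneq i a) => [-> | ia]; first by rewrite ra.
    by rewrite -dom fupdate_neq.
  - by apply: (inj i i' x); rewrite (off _ x).
    rewrite in_setU1 negb_or (im i x) ?(off _ x) // andbT; apply/eqP => xj.
    have ia : i = a by apply: (inj i a j); rewrite ?fupdate_eq // (off _ x) // ei xj.
    by rewrite ia ra in ei.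
have ra : rho a = None by apply/eqP; rewrite -[_ == _]negbK dom setD11.
split; last by rewrite ra.
apply/partinjP; split=> [i | i i' x | i x]; rewrite ?ffunE.
- by case: (eqVneq i a) => [-> // | ia]; rewrite dom in_setD1 ia.
- case: (eqVneq i a) => [-> | ia]; case: (eqVneq i' a) => [-> // | ia'] //.
  + by move=> [<-] /(im i'); rewrite setU11.
  + by move=> /(im i) + [ex]; rewrite -ex setU11.
  + exact: inj.
case: (eqVneq i a) => [_ [<-] // | _ /(im i)].
by rewrite in_setU1 negb_or => /andP[].
Qed.

End PartialInjection.

Section PartialInjectionSum.
Variables (R : comNzRingType) (n N : nat) (r : 'I_n -> 'I_N -> R).
Implicit Types (T : {set 'I_N}) (A : {set 'I_n}) (rho : {ffun 'I_n -> option 'I_N}).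

Definition pweight rho : R := \prod_i oapp (r i) 1 (rho i).

Definition psum T A : R := \sum_(rho | partinj T A rho) pweight rho.

Lemma pweight_fupdate rho a j :
  rho a = None -> pweight (fupdate rho a (Some j)) = r a j * pweight rho.
Proof.
move=> ra; rewrite /pweight (bigD1 a) //= [in RHS](bigD1 a) //= fupdate_eq ra mul1r.
by congr (_ * _); apply: eq_bigr => i ia; rewrite fupdate_neq.
Qed.

Lemma psum_hit_at T A a j : a \in A -> j \notin T ->
  \sum_(rho | partinj T A rho && (rho a == Some j)) pweight rho =
  r a j * psum (j |: T) (A :\ a).
Proof.
move=> aA jT; rewrite /psum big_distrr /=.
rewrite (reindex_onto (fun rho => fupdate rho a (Some j))
                      (fun rho => fupdate rho a None)) /=.
  apply: eq_big => rho.
    by rewrite fupdate_eq eqxx andbT fupdate_fupdate fupdate_id partinj_fupdate.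
  by rewrite fupdate_fupdate fupdate_id => /andP[_ /eqP /pweight_fupdate].
by move=> rho /andP[_ /eqP ra]; apply/eqP; rewrite fupdate_fupdate fupdate_id ra.
Qed.

Lemma psum_point_rec T A j : j \notin T ->
  psum T A = psum (j |: T) A + \sum_(a in A) r a j * psum (j |: T) (A :\ a).
Proof.
move=> jT; under [X in _ = _ + X]eq_bigr => a aA do rewrite -psum_hit_at //.
rewrite /psum (bigID (fun rho => [forall i, rho i != Some j])) /=.
congr (_ + _); first by apply: eq_bigl => rho; rewrite partinj_setU1.
rewrite (exchange_big_dep (partinj T A)) /=; last by move=> a rho _ /andP[].
rewrite big_mkcondr; apply: eq_bigr => rho pinj.
have /partinjP[dom inj _] := pinj.
case: ifPn => [/forallPn[a /negPn /eqP ra] | /negPn/forallP nj].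
  rewrite (big_pred1 a) // => a'; rewrite pinj /=.
  apply/andP/eqP => [[_ /eqP ra'] | ->]; first exact: inj ra' ra.
  by rewrite -dom ra eqxx.
by rewrite big_pred0 // => a; rewrite (negbTE (nj a)) !andbF.
Qed.

Lemma psum_setU1 T A j : j \notin T ->
  psum (j |: T) A =
  \sum_(s : {set 'I_n} | s \subset A) inv_coef (r^~ j) s * psum T (A :\: s).
Proof. by move=> jT; apply: recurrence_inversion => B; apply: psum_point_rec. Qed.

End PartialInjectionSum.

Section Reindexing.
Variables (R : comNzRingType) (n N m : nat) (r : 'I_n -> 'I_N -> R).
Variables (g : 'I_m -> 'I_n) (A : {set 'I_n}).
Hypotheses (g_inj : injective g) (A_codom : A =i codom g).

Definition ginv (i : 'I_n) : option 'I_m := [pick o | g o == i].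

Lemma ginvP i : if ginv i is Some o then g o = i else i \notin A.
Proof.
rewrite /ginv; case: pickP => [o /eqP // | no_o].
by rewrite A_codom; apply/codomP => -[o io]; have := no_o o; rewrite /= io eqxx.
Qed.

Lemma ginv_g o : ginv (g o) = Some o.
Proof.
have := ginvP (g o); case: (ginv (g o)) => [o' /g_inj -> // |].
by rewrite A_codom codom_f.
Qed.

Definition extend (f : {ffun 'I_m -> 'I_N}) : {ffun 'I_n -> option 'I_N} :=
  [ffun i => omap f (ginv i)].

Lemma extend_inj : injective extend.
Proof.
move=> f f' /ffunP ff'; apply/ffunP => o.
by move: (ff' (g o)); rewrite !ffunE ginv_g => -[].
Qed.

Lemma pweight_extend f : pweight r (extend f) = \prod_o r (g o) (f o).
Proof.
rewrite /pweight (bigID (mem A)) /= [X in _ * X]big1 ?mulr1; last first.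
  move=> i; rewrite ffunE; have := ginvP i.
  by case: ginv => //= o <-; rewrite A_codom codom_f.
rewrite (reindex_omap g ginv) => [|i iA]; last first.
  by have := ginvP i; case: ginv => [o /= -> | /negP].
by apply: eq_big => o; rewrite ?ffunE A_codom codom_f ginv_g ?eqxx.
Qed.

Lemma partinj_extend T f :
  partinj T A (extend f) = injectiveb f && [forall o, f o \notin T].
Proof.
apply/partinjP/andP => [[_ inj im] | [/injectiveP f_inj /forallP fT]].
  split; last by apply/forallP => o; apply: (im (g o)); rewrite ffunE ginv_g.
  apply/injectiveP => o o' ff'; apply: g_inj; apply: (inj _ _ (f o)).
    by rewrite ffunE ginv_g.
  by rewrite ffunE ginv_g ff'.
split=> [i | i i' x | i x]; rewrite !ffunE.
- by have := ginvP i; case: ginv => [o <- | /negbTE ->] //=; rewrite A_codom codom_f.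
- have := ginvP i; have := ginvP i'.
  by case: ginv => [o' <-|] //; case: ginv => [o <-|] //= [<-] [/f_inj ->].
- by case: ginv => //= o [<-].
Qed.

Lemma partinj_is_extend T rho : partinj T A rho -> exists f, extend f = rho.
Proof.
move=> /partinjP[dom _ _].
have defined o : exists x, rho (g o) = Some x.
  by have := dom (g o); rewrite A_codom codom_f; case: (rho (g o)) => // x; exists x.
have [u hu] := fin_all_exists defined.
exists (finfun u); apply/ffunP => i; rewrite ffunE.
have := ginvP i; case: ginv => [o <- | iA] /=; first by rewrite ffunE hu.
by apply/esym/eqP; rewrite -[_ == _]negbK dom (negbTE iA).
Qed.

Lemma psum_reindex T :
  psum r T A =
  \sum_(f : {ffun 'I_m -> 'I_N} | injectiveb f && [forall o, f o \notin T])
     \prod_o r (g o) (f o).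
Proof.
rewrite /psum (reindex_omap extend (fun rho => [pick f | extend f == rho])); last first.
  move=> rho /partinj_is_extend[f <-].
  by case: pickP => [f' /eqP /extend_inj -> // | /(_ f)]; rewrite eqxx.
apply: eq_big => [f | f _]; last exact: pweight_extend.
rewrite partinj_extend; case: pickP => [f' /eqP /extend_inj -> | /(_ f)].
  by rewrite eqxx andbT.
by rewrite eqxx.
Qed.

End Reindexing.

Lemma Ssum_rsub (R : comNzRingType) n N (r : 'I_n -> 'I_N -> R) T A :
  Ssum T (rsub r A) = psum r T A.
Proof.
have sizeA : size (rsub r A) = #|A| by rewrite size_map cardE.
pose g o := enum_val (cast_ord sizeA o).
have g_inj : injective g by move=> o o' /enum_val_inj /cast_ord_inj.
have A_codom : A =i codom g.
  move=> i; apply/idP/codomP => [iA | [o ->]]; last exact: enum_valP.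
  exists (cast_ord (esym sizeA) (enum_rank_in iA i)).
  by rewrite /g cast_ordKV enum_rankK_in.
rewrite (psum_reindex r g_inj A_codom); apply: eq_bigr => f _; apply: eq_bigr => o _.
rewrite /rsub (nth_map (g o)) -?cardE -?sizeA //.
by rewrite [g o in RHS](enum_val_nth (g o)).
Qed.

Section DisjointFamily.
Variables (J I : finType).
Implicit Types (K : {set J}) (A s : {set I}) (tau : {ffun J -> {set I}}).

Definition disj_family K A tau : bool :=
  [&& [forall t, (t \notin K) ==> (tau t == set0)],
      [forall t, forall t', (t != t') ==> [disjoint tau t & tau t']] &
      [forall t, tau t \subset A]].

Lemma disj_familyP K A tau :
  reflect [/\ forall t, t \notin K -> tau t = set0,
              forall t t', t != t' -> [disjoint tau t & tau t'] &
              forall t, tau t \subset A] (disj_family K A tau).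
Proof.
apply: (iffP and3P) => [[/forallP supp /forallP disj /forallP sub] | [supp disj sub]].
  split=> // [t tK | t t' tt']; first exact/eqP/(implyP (supp t)).
  exact: implyP (forallP (disj t) t') tt'.
split; apply/forallP => t; first by apply/implyP => /supp ->.
  by apply/forallP => t'; apply/implyP => /disj.
exact: sub.
Qed.

Lemma disjoint_set0 (B : {set I}) : [disjoint set0 & B].
Proof. by rewrite -setI_eq0 set0I. Qed.

Lemma disj_family_fupdate K A tau t0 s : t0 \in K -> s \subset A ->
  disj_family K A (fupdate tau t0 s) && (tau t0 == set0) =
  disj_family (K :\ t0) (A :\: s) tau.
Proof.
move=> t0K sA; set tau' := fupdate tau t0 s.
have off t : t != t0 -> tau' t = tau t by apply: fupdate_neq.
apply/andP/disj_familyP => [[/disj_familyP[supp disj sub] /eqP e0] | [supp disj sub]].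
  split=> [t | t t' tt' | t].
  - rewrite in_setD1 negb_and negbK => /orP[/eqP -> // | tK].
    by rewrite -off ?supp //; apply: contraNneq tK => ->.
  - case: (eqVneq t t0) => [-> | tt0]; first by rewrite e0 disjoint_set0.
    case: (eqVneq t' t0) => [-> | t't0]; first by rewrite e0 disjoint_sym disjoint_set0.
    by rewrite -!off //; apply: disj.
  - case: (eqVneq t t0) => [-> | tt0]; first by rewrite e0 sub0set.
    rewrite subsetD -off // sub /=.
    by have := disj t t0 tt0; rewrite fupdate_eq.
have e0 : tau t0 = set0 by apply: supp; rewrite setD11.
split; last by rewrite e0.
apply/disj_familyP; split=> [t tK | t t' tt' | t].
- by rewrite off ?supp ?in_setD1 ?negb_and ?tK ?orbT //; apply: contraNneq tK => ->.
- case: (eqVneq t t0) tt' => [-> | tt0] tt'.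
    by rewrite fupdate_eq off 1?eq_sym // disjoint_sym; case/subsetDP: (sub t').
  case: (eqVneq t' t0) tt' => [-> | t't0] tt'.
    by rewrite fupdate_eq off //; case/subsetDP: (sub t).
  by rewrite !off //; apply: disj.
case: (eqVneq t t0) => [-> | tt0]; first by rewrite fupdate_eq.
by rewrite off //; apply: subset_trans (sub t) (subsetDl _ _).
Qed.

Lemma sum_disj_family_setD1 (R : nmodType) (G : {ffun J -> {set I}} -> R) K A t0 :
  t0 \in K ->
  \sum_(tau | disj_family K A tau) G tau =
  \sum_(s : {set I} | s \subset A)
     \sum_(tau | disj_family (K :\ t0) (A :\: s) tau) G (fupdate tau t0 s).
Proof.
move=> t0K.
rewrite (partition_big (fun tau => tau t0) (fun s : {set I} => s \subset A)) /=;
  last by move=> tau /disj_familyP[].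
apply: eq_bigr => s sA.
rewrite (reindex_onto (fun tau => fupdate tau t0 s) (fun tau => fupdate tau t0 set0)) /=.
  apply: eq_bigl => tau.
  by rewrite fupdate_eq eqxx andbT fupdate_fupdate fupdate_id disj_family_fupdate.
by move=> tau /andP[_ /eqP e]; apply/eqP; rewrite fupdate_fupdate fupdate_id e.
Qed.

End DisjointFamily.

Section PsumImage.
Variables (R : comNzRingType) (n N : nat) (r : 'I_n -> 'I_N -> R).
Variables (J : finType) (j : J -> 'I_N).
Hypothesis j_inj : injective j.

Lemma psum_imset (K : {set J}) (A : {set 'I_n}) :
  psum r (j @: K) A =
  \sum_(tau : {ffun J -> {set 'I_n}} | disj_family K A tau)
     (\prod_(t in K) inv_coef (r^~ (j t)) (tau t)) *
     psum r set0 (A :\: \bigcup_(t in K) tau t).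
Proof.
have [m] := ubnP #|K|; elim: m K A => // m IH K A /ltnSE cardK.
have [-> | [t0 t0K]] := set_0Vmem K.
  rewrite imset0 (big_pred1 [ffun => set0]) => [|tau].
    by rewrite !big_set0 mul1r setD0.
  apply/disj_familyP/eqP => [[supp _ _] | ->].
    by apply/ffunP => t; rewrite ffunE supp ?inE.
  by split=> [t _ | t t' _ | t]; rewrite !ffunE ?disjoint_set0 ?sub0set.
have jt0 : j t0 \notin j @: (K :\ t0) by rewrite mem_imset // setD11.
have cardKt0 : (#|K :\ t0| < m)%N by apply: leq_trans cardK; rewrite (cardsD1 t0 K) t0K.
rewrite -(setD1K t0K) imsetU1 psum_setU1 // setD1K // (sum_disj_family_setD1 _ _ t0K).
apply: eq_bigr => s _; rewrite IH // big_distrr; apply: eq_bigr => tau _ /=.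
have off t : t \in K :\ t0 -> fupdate tau t0 s t = tau t.
  by rewrite in_setD1 => /andP[tt0 _]; apply: fupdate_neq.
rewrite (big_setD1 t0 t0K) [\bigcup_(t in K) _](big_setD1 t0 t0K) /= !fupdate_eq.
rewrite setDDl mulrA.
by congr (_ * _ * psum r set0 (A :\: (s :|: _))); apply: eq_bigr => t /off ->.
Qed.

End PsumImage.

Theorem proposition2p7 (p : nat) (hp : prime p) (n N k : nat)
    (r : 'I_n -> 'I_N -> 'F_p) (j : 'I_k -> 'I_N) (hj : injective j) :
  Ssum [set j t | t : 'I_k] (rsub r setT) =
  \sum_(tau : {ffun 'I_k -> {set 'I_n}} |
          [forall s : 'I_k, forall t : 'I_k,
             (s != t) ==> [disjoint tau s & tau t]])
     (\prod_(t < k)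
        ((-1) ^+ #|tau t| * (#|tau t|`!)%:R * rprod r (tau t) (j t)))
     * S0 (rsub r (~: \bigcup_(t < k) tau t)).
Proof.
have -> : [set j t | t : 'I_k] = j @: setT.
  by apply/setP => x; apply/imsetP/imsetP => -[t _ ->]; exists t.
rewrite Ssum_rsub (psum_imset r hj setT setT).
apply: eq_big => tau.
  apply/disj_familyP/forallP => [[_ disj _] t | disj].
    by apply/forallP => t'; apply/implyP; apply: disj.
  by split=> [t | t t' | t]; rewrite ?inE ?subsetT //; apply/implyP/(forallP (disj t)).
move=> _; rewrite /S0 Ssum_rsub setTD.
by congr (_ * psum r set0 (~: _)); apply: eq_bigl => t; rewrite inE.
Qed.
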